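(* No judgment aggregation rule satisfies both the maximin property and the equity property.
   Context: An agenda is a finite nonempty list $\Phi=(\phi_1,\dots,\phi_m)$ of propositional formulas; a judgment is a vector $J\in\{0,1\}^m$, where $J(\phi_k)\in\{0,1\}$ is its $k$-th entry (1 = accepted, 0 = rejected). $\mathcal{J}(\Phi)\subseteq\{0,1\}^m$ is the nonempty set of admissible (logically consistent) judgments for $\Phi$; the agenda may be chosen so that $\mathcal{J}(\Phi)$ is any prescribed nonempty set of vectors. For a finite set of agents $N$ with $|N|=n\ge 2$, a profile is $\mathbf{P}=(J_1,\dots,J_n)\in\mathcal{J}(\Phi)^n$. A judgment aggregation rule $F$ maps every profile, for every finite group $N$ and every agenda $\Phi$, to a nonempty set $F(\mathbf{P})\subseteq\mathcal{J}(\Phi)$. The Hamming distance is $H(J,J')=\sum_{k=1}^m|J(\phi_k)-J'(\phi_k)|$. $F$ satisfies the maximin property if for all profiles $\mathbf{P}$ and all $J\in F(\mathbf{P})$ there do not exist $J'\in\mathcal{J}(\Phi)$ and $j\in N$ with $H(J_i,J')<H(J_j,J)$ for all $i\in N$. $F$ satisfies the equity property if for all profiles $\mathbf{P}$ and all $J\in F(\mathbf{P})$ there do not exist $J'\in\mathcal{J}(\Phi)$ and $i',j'\in N$ with $|H(J_i,J')-H(J_j,J')|<|H(J_{i'},J)-H(J_{j'},J)|$ for all $i,j\in N$. *)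

From mathcomp Require Import all_boot.
Set Implicit Arguments. Unset Strict Implicit. Unset Printing Implicit Defensive.

Inductive form : Type :=
  | Var of nat
  | Neg of form
  | And of form & form
  | Or of form & form.

Fixpoint eval (v : nat -> bool) (f : form) : bool :=
  match f with
  | Var x => v x
  | Neg g => ~~ eval v g
  | And g h => eval v g && eval v h
  | Or g h => eval v g || eval v h
  end.

Definition agenda (m : nat) := m.-tuple form.

(* A judgment: a 0/1 vector of length m (true = accepted). *)
Definition judgment (m : nat) := {ffun 'I_m -> bool}.

(* J is admissible (logically consistent) for Phi: the formulas accepted and
   the negations of the formulas rejected are jointly satisfiable. *)
Definition admissible (m : nat) (Phi : agenda m) (J : judgment m) : Prop :=
  exists v : nat -> bool, forall k : 'I_m, J k = eval v (tnth Phi k).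

Definition hamming (m : nat) (J J' : judgment m) : nat :=
  \sum_(k < m) (J k != J' k).

Definition natdist (a b : nat) : nat := (a - b) + (b - a).

Definition profile (n m : nat) := 'I_n -> judgment m.

Definition admissible_profile (n m : nat) (Phi : agenda m) (P : profile n m) :=
  forall i : 'I_n, admissible Phi (P i).

(* A candidate aggregation rule: F n m Phi P J means J \in F(P). *)
Definition rule_type :=
  forall (n m : nat), agenda m -> profile n m -> judgment m -> Prop.

Definition is_JA_rule (F : rule_type) : Prop :=
  forall (n m : nat) (Phi : agenda m) (P : profile n m),
    1 < n -> 0 < m -> admissible_profile Phi P ->
    (exists J, F n m Phi P J) /\ (forall J, F n m Phi P J -> admissible Phi J).

Definition maximin (F : rule_type) : Prop :=
  forall (n m : nat) (Phi : agenda m) (P : profile n m),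
    1 < n -> 0 < m -> admissible_profile Phi P ->
    forall J, F n m Phi P J ->
      ~ (exists J' : judgment m, admissible Phi J' /\
           exists j : 'I_n, forall i : 'I_n, hamming (P i) J' < hamming (P j) J).

Definition equity (F : rule_type) : Prop :=
  forall (n m : nat) (Phi : agenda m) (P : profile n m),
    1 < n -> 0 < m -> admissible_profile Phi P ->
    forall J, F n m Phi P J ->
      ~ (exists J' : judgment m, admissible Phi J' /\
           exists i' j' : 'I_n, forall i j : 'I_n,
             natdist (hamming (P i) J') (hamming (P j) J')
             < natdist (hamming (P i') J) (hamming (P j') J)).

From mathcomp Require Import all_boot.

(* A rule must pick some admissible judgment at every admissible
   profile, so it suffices to exhibit one profile at which every admissible
   judgment is ruled out by the maximin or by the equity property
   ([no_rule_of_blocking_profile]).  We use the agenda (p \/ q, p /\ ~q, q, q)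
   with two voters holding 0000 (p, q false) and 1100 (p true, q false).
   The admissible judgments are the [outcome p q] for valuations of p and q,
   i.e. 0000, 1100 and 1011.  A judgment accepting q is 1011, at distance 3
   from both voters, while 0000 is at distance at most 2 from both: it is
   maximin-dominated.  A judgment rejecting q is 0000 or 1100, at distances
   {0, 2} from the voters, while 1011 is equidistant: it is
   equity-dominated. *)

Section Blocking.
Variables (n m : nat) (Phi : agenda m) (P : profile n m).

Definition maximin_dominated (J : judgment m) : Prop :=
  exists J' : judgment m, admissible Phi J' /\
    exists j : 'I_n, forall i : 'I_n, hamming (P i) J' < hamming (P j) J.

Definition equity_dominated (J : judgment m) : Prop :=
  exists J' : judgment m, admissible Phi J' /\
    exists i' j' : 'I_n, forall i j : 'I_n,
      natdist (hamming (P i) J') (hamming (P j) J')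
      < natdist (hamming (P i') J) (hamming (P j') J).

Lemma no_rule_of_blocking_profile :
  1 < n -> 0 < m -> admissible_profile Phi P ->
  (forall J, admissible Phi J -> maximin_dominated J \/ equity_dominated J) ->
  ~ (exists F : rule_type, is_JA_rule F /\ maximin F /\ equity F).
Proof.
move=> n_gt1 m_gt0 admP blocked [F [ruleF [maxF eqF]]].
have [[J FJ] F_adm] := ruleF n m Phi P n_gt1 m_gt0 admP.
have [domJ | domJ] := blocked J (F_adm J FJ).
- exact: maxF n m Phi P n_gt1 m_gt0 admP J FJ domJ.
- exact: eqF n m Phi P n_gt1 m_gt0 admP J FJ domJ.
Qed.

End Blocking.

Arguments maximin_dominated {n m}.
Arguments equity_dominated {n m}.

Definition Phi0 : agenda 4 :=
  [tuple Or (Var 0) (Var 1); And (Var 0) (Neg (Var 1)); Var 1; Var 1].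

Definition outcome (p q : bool) : judgment 4 :=
  [ffun k : 'I_4 => nth false [:: p || q; p && ~~ q; q; q] k].

Lemma outcome_admissible (p q : bool) : admissible Phi0 (outcome p q).
Proof.
exists (fun x => if x == 0 then p else q).
by move=> [[|[|[|[|k]]]] lt_k4]; rewrite ffunE.
Qed.

Lemma admissible_outcome (J : judgment 4) :
  admissible Phi0 J -> exists p q, J = outcome p q.
Proof.
move=> [v Jv]; exists (v 0), (v 1); apply/ffunP => k.
by rewrite Jv ffunE; case: k => [[|[|[|[|k]]]] lt_k4].
Qed.

Lemma hamming4 (A B : judgment 4) : hamming A B =
  (A (inord 0) != B (inord 0)) + (A (inord 1) != B (inord 1)) +
  (A (inord 2) != B (inord 2)) + (A (inord 3) != B (inord 3)).
Proof.
rewrite /hamming !big_ord_recl big_ord0 addn0 !addnA.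
by congr (_ + _ + _ + _); congr (A _ != B _); apply: val_inj; rewrite /= inordK.
Qed.

Lemma hamming_outcome (p q p' q' : bool) :
  hamming (outcome p q) (outcome p' q') =
  ((p || q) != (p' || q')) + ((p && ~~ q) != (p' && ~~ q')) +
  (q != q') + (q != q').
Proof. by rewrite hamming4 !ffunE !inordK. Qed.

Definition P0 : profile 2 4 := fun i => outcome (val i != 0) false.

Lemma P0_admissible : admissible_profile Phi0 P0.
Proof. by move=> i; apply: outcome_admissible. Qed.

Lemma accept_q_maximin_dominated (p : bool) :
  maximin_dominated Phi0 P0 (outcome p true).
Proof.
exists (outcome false false); split; first exact: outcome_admissible.
exists ord0 => -[[|[|i]] lt_i2] //;
  by rewrite /P0 !hamming_outcome; case: p.
Qed.

Lemma reject_q_equity_dominated (p : bool) :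
  equity_dominated Phi0 P0 (outcome p false).
Proof.
have equidistant : forall i : 'I_2, hamming (P0 i) (outcome false true) = 3.
  by move=> i; rewrite /P0 hamming_outcome; case: (val i != 0).
exists (outcome false true); split; first exact: outcome_admissible.
exists ord0, (Ordinal (isT : 1 < 2)) => i j.
by rewrite !equidistant /P0 !hamming_outcome /natdist; case: p.
Qed.

Theorem proposition1 :
  ~ (exists F : rule_type, is_JA_rule F /\ maximin F /\ equity F).
Proof.
apply: (@no_rule_of_blocking_profile 2 4 Phi0 P0) => //; first exact: P0_admissible.
move=> J /admissible_outcome [p [[|] ->]].
- by left; apply: accept_q_maximin_dominated.
- by right; apply: reject_q_equity_dominated.
Qed.
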